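(* Consider a semi-discrete split-form discontinuous Galerkin spectral element approximation of a hyperbolic conservation law on an element $E$ whose total discrete mathematical entropy $\mathcal{E}(t)$ satisfies $$\frac{d\mathcal{E}}{dt} + \int_{\partial E,N}\Big\{F_n^{\mathrm{ent}} + V^T\big(F^*_n - F_n\big)\Big\}\hat s\,dS \le 0,$$ where $\int_{\partial E,N}$ denotes Gauss–Lobatto quadrature (with positive weights) over the boundary, $\hat s>0$ is the scaling between physical and reference normals, $V$ is the vector of entropy variables, $F_n$ is the physical normal flux, $F^*_n$ is the numerical boundary flux, and $F_n^{\mathrm{ent}}$ is the normal entropy flux. Suppose that at each boundary quadrature node the entropy flux can be written as $F_n^{\mathrm{ent}} = U^T A U = W^T\Lambda W$ with $A = T\Lambda T^T$, $\Lambda$ real diagonal, $W = T^T U$ for some vector of variables $U$. Define $\Lambda^{\pm} = \tfrac12(\Lambda\pm|\Lambda|)$, let $I^-$ be the diagonal indicator matrix selecting the negative diagonal entries of $\Lambda$, $W^- = I^- T^T U$, and $\sqrt{|\Lambda^-|}$ the entrywise square root of $|\Lambda^-|$. If at the (inflow/outflow) boundary nodes, with external data specified as a vector $G$, the numerical boundary flux satisfies $$V^T\big(F^*_n - F_n\big) = U^T\Big(2\,T\,I^-\sqrt{|\Lambda^-|}\big(\sqrt{|\Lambda^-|}\,W^- - G\big)\Big),$$ then $$\frac{d\mathcal{E}}{dt} \le \int_{\partial E,N} G^T G\,\hat s\,dS,$$ i.e. the entropy rate is bounded solely by the boundary data.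
   Context: The mathematical entropy $S(q)$ is a strictly convex function of the conserved variables $q$, the entropy variables are $V = \partial S/\partial q$, and the entropy flux $f^{\mathrm{ent}}$ satisfies the compatibility condition $V^T f_q = f^{\mathrm{ent}}_q$. $|\Lambda|$ denotes the diagonal matrix of absolute values of the entries of $\Lambda$. The entropy inequality assumed in the claim is the one satisfied by split-form DGSEM with entropy conservative/stable interface fluxes, so that only physical boundary terms remain. *)

From HB Require Import structures.
From mathcomp Require Import all_boot all_order all_algebra.
Set Implicit Arguments. Unset Strict Implicit. Unset Printing Implicit Defensive.
Import Order.TTheory GRing.Theory Num.Theory.
Local Open Scope ring_scope.

Section Defs.
Variables (R : rcfType) (m : nat).

Definition Lam (lam : 'rV[R]_m) : 'M[R]_m := diag_mx lam.
Definition absM (M : 'M[R]_m) : 'M[R]_m := map_mx (fun x => `|x|) M.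
Definition LamPlus (lam : 'rV[R]_m) : 'M[R]_m :=
  (2%:R)^-1 *: (Lam lam + absM (Lam lam)).
Definition LamMinus (lam : 'rV[R]_m) : 'M[R]_m :=
  (2%:R)^-1 *: (Lam lam - absM (Lam lam)).
Definition Iminus (lam : 'rV[R]_m) : 'M[R]_m :=
  diag_mx (\row_i (if lam 0 i < 0 then 1 else 0)).
Definition sqrtAbsLamMinus (lam : 'rV[R]_m) : 'M[R]_m :=
  map_mx (fun x => Num.sqrt x) (absM (LamMinus lam)).
Definition Wvar (T : 'M[R]_m) (U : 'cV[R]_m) : 'cV[R]_m := T^T *m U.
Definition Wminus (lam : 'rV[R]_m) (T : 'M[R]_m) (U : 'cV[R]_m) : 'cV[R]_m :=
  Iminus lam *m T^T *m U.
Definition sc (M : 'M[R]_1) : R := M 0 0.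
End Defs.

From HB Require Import structures.
From mathcomp Require Import all_boot all_order all_algebra.
From mathcomp Require Import ring lra.
Import Order.TTheory GRing.Theory Num.Theory.
Local Open Scope ring_scope.

(* Everything is diagonal in the characteristic variables W = T^T U, and the
   boundary term at a node splits into one scalar term per characteristic
   field.  On an outgoing field (lambda >= 0) the penalty vanishes and what is
   left, lambda w^2 + g^2, is nonnegative.  On an incoming field (lambda < 0)
   the penalty is designed so that, with s = sqrt(-lambda), the term becomes
   lambda w^2 + 2 s w (s w - g) + g^2 = (s w - g)^2 >= 0.  Summing these
   nonnegative terms with positive quadrature weights and normal scalings and
   comparing with the assumed entropy inequality gives the bound. *)

Section CharacteristicBoundaryTerm.
Variables (R : rcfType) (m : nat).

Definition sqrt_neg_part (x : R) : R := Num.sqrt `|2%:R^-1 * (x - `|x|)|.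

Lemma sqr_sqrt_neg_part (x : R) : x < 0 -> sqrt_neg_part x ^+ 2 = - x.
Proof.
move=> x_lt0; rewrite /sqrt_neg_part.
have -> : 2%:R^-1 * (x - `|x|) = x by rewrite ltr0_norm // opprK; field.
by rewrite sqr_sqrtr ?normr_ge0 // ltr0_norm.
Qed.

(* Stated in the shape produced by expanding [node_boundary_term_ge0] entrywise. *)
Lemma boundary_term_ge0 (d w g : R) (e := if d < 0 then 1 else 0)
    (s := sqrt_neg_part d) :
  0 <= w * (d * w) + w * (2%:R * (e * (s * (s * (e * w) - g)))) + g * g.
Proof.
rewrite {}/e; case: ltrP => d_sign.
  have -> : d = - s ^+ 2 by rewrite sqr_sqrt_neg_part ?opprK.
  have -> : w * (- s ^+ 2 * w) + w * (2%:R * (1 * (s * (s * (1 * w) - g)))) + g * g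
    = (s * w - g) ^+ 2 by ring.
  exact: sqr_ge0.
rewrite !mul0r !mulr0 addr0 -!expr2 mulrCA -expr2.
by rewrite addr_ge0 ?sqr_ge0 // mulr_ge0 ?sqr_ge0.
Qed.

Lemma sc_trmx_mul (a b : 'cV[R]_m) : sc (a^T *m b) = \sum_i a i 0 * b i 0.
Proof. by rewrite /sc !mxE; apply: eq_bigr => i _; rewrite mxE. Qed.

Lemma sqrtAbsLamMinusE (lam : 'rV[R]_m) :
  sqrtAbsLamMinus lam = diag_mx (map_mx sqrt_neg_part lam).
Proof.
apply/matrixP => i j; rewrite !mxE; case: (eqVneq i j) => [->|_] /=.
  by rewrite !mulr1n.
by rewrite !mulr0n normr0 subr0 mulr0 normr0 sqrtr0.
Qed.

Lemma node_boundary_term_ge0 (T : 'M[R]_m) (lam : 'rV[R]_m) (U G : 'cV[R]_m) :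
  0 <= sc ((Wvar T U)^T *m Lam lam *m Wvar T U)
     + sc (U^T *m (2%:R *: (T *m Iminus lam *m sqrtAbsLamMinus lam
          *m (sqrtAbsLamMinus lam *m Wminus lam T U - G))))
     + sc (G^T *m G).
Proof.
set W := Wvar T U.
have -> : U^T *m (2%:R *: (T *m Iminus lam *m sqrtAbsLamMinus lam
          *m (sqrtAbsLamMinus lam *m Wminus lam T U - G)))
  = W^T *m (2%:R *: (Iminus lam *m (sqrtAbsLamMinus lam
          *m (sqrtAbsLamMinus lam *m (Iminus lam *m W) - G)))).
  by rewrite /W /Wvar /Wminus trmx_mul trmxK -!scalemxAr !mulmxA.
rewrite -mulmxA sqrtAbsLamMinusE /Iminus /Lam !sc_trmx_mul -!big_split /=.
apply: sumr_ge0 => i _; rewrite !mul_diag_mx !mxE.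
exact: boundary_term_ge0.
Qed.

End CharacteristicBoundaryTerm.

Theorem theorem2 (R : rcfType) (m N : nat)
  (w shat : 'I_N -> R)
  (U V Fstar Fn G : 'I_N -> 'cV[R]_m)
  (T A : 'I_N -> 'M[R]_m) (lam : 'I_N -> 'rV[R]_m)
  (Fent : 'I_N -> R) (dEdt : R) :
  (forall k, 0 < w k) ->
  (forall k, 0 < shat k) ->
  (forall k, A k = T k *m Lam (lam k) *m (T k)^T) ->
  (forall k, Fent k = sc ((U k)^T *m A k *m U k)) ->
  (forall k, Fent k = sc ((Wvar (T k) (U k))^T *m Lam (lam k) *m Wvar (T k) (U k))) ->
  (forall k, sc ((V k)^T *m (Fstar k - Fn k)) =
     sc ((U k)^T *m (2%:R *: (T k *m Iminus (lam k) *m sqrtAbsLamMinus (lam k)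
          *m (sqrtAbsLamMinus (lam k) *m Wminus (lam k) (T k) (U k) - G k))))) ->
  dEdt + \sum_(k < N) w k * (Fent k + sc ((V k)^T *m (Fstar k - Fn k))) * shat k <= 0 ->
  dEdt <= \sum_(k < N) w k * sc ((G k)^T *m G k) * shat k.
Proof.
move=> w_gt0 shat_gt0 _ _ Fent_char penalty entropy_ineq.
have quadrature_ge0 :
    0 <= \sum_(k < N) (w k * (Fent k + sc ((V k)^T *m (Fstar k - Fn k))) * shat k
                       + w k * sc ((G k)^T *m G k) * shat k).
  apply: sumr_ge0 => k _; rewrite -mulrDl -mulrDr Fent_char penalty.
  apply: mulr_ge0; last exact: ltW.
  by apply: mulr_ge0; [exact: ltW | exact: node_boundary_term_ge0].
move: quadrature_ge0; rewrite big_split /=; lra.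
Qed.
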